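(* Every ergodic infinite permutation $\alpha$ has exactly one canonical representative.
   Context: An infinite permutation is an equivalence class of infinite real sequences $(a[n])_{n\ge 0}$ with pairwise distinct elements, under the relation $(a[n])\sim(b[n])$ iff for all $i,j$: $a[i]<a[j]\Leftrightarrow b[i]<b[j]$; any sequence in the class is a representative, and we write $\alpha[i]<\alpha[j]$ iff $a[i]<a[j]$ for a representative. A real sequence $(a[i])_{i\ge0}$ is canonical if (i) its elements are pairwise distinct, (ii) $0\le a[i]\le 1$ for all $i$, and (iii) for every $t\in[0,1]$ the ratio $\#\{0\le k<n : a[j+k]<t\}/n$ tends to $t$ as $n\to\infty$, uniformly in $j\ge 0$. An infinite permutation is ergodic if it has a canonical representative. *)

From Stdlib Require Import Reals.
Open Scope R_scope.

Definition distinct_seq (a : nat -> R) : Prop :=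
  forall i j : nat, i <> j -> a i <> a j.

(* An infinite permutation is an equivalence class of distinct sequences
   under this relation; a sequence b represents the class of a iff
   b is distinct and same_order a b. *)
Definition same_order (a b : nat -> R) : Prop :=
  forall i j : nat, a i < a j <-> b i < b j.

Fixpoint count_below (a : nat -> R) (j n : nat) (t : R) : nat :=
  match n with
  | O => O
  | S m => (count_below a j m t + (if Rlt_dec (a (j + m)%nat) t then 1 else 0))%nat
  end.

Definition canonical (a : nat -> R) : Prop :=
  distinct_seq a /\
  (forall i : nat, 0 <= a i <= 1) /\
  (forall t : R, 0 <= t <= 1 ->
     forall eps : R, eps > 0 ->
       exists N : nat, forall n j : nat, (n >= N)%nat -> (n > 0)%nat ->
         Rabs (INR (count_below a j n t) / INR n - t) < eps).

Definition ergodic (a : nat -> R) : Prop :=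
  exists b : nat -> R, same_order a b /\ canonical b.

(* Canonical representatives are determined by their order type: the value
   b[i] of a canonical sequence is the asymptotic frequency of the indices k
   with b[k] < b[i], and this frequency only depends on the relative order of
   the terms.  Two canonical representatives of the same permutation therefore
   agree everywhere; existence is the definition of ergodicity. *)

From Stdlib Require Import Reals Lra Lia FunctionalExtensionality.
Open Scope R_scope.

Lemma same_order_trans_sym (a b c : nat -> R) :
  same_order a b -> same_order a c -> same_order b c.
Proof.
  intros Sab Sac i j; rewrite <- (Sab i j); apply Sac.
Qed.

Lemma count_below_ext (b c : nat -> R) (s t : R) (j n : nat) :
  (forall k, b k < s <-> c k < t) ->
  count_below b j n s = count_below c j n t.
Proof.
  intros Hbc; induction n as [|n IH]; simpl; auto.
  rewrite IH.
  destruct (Rlt_dec (b (j + n)%nat) s) as [h1|h1];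
  destruct (Rlt_dec (c (j + n)%nat) t) as [h2|h2]; auto;
  exfalso; [apply h2, Hbc, h1 | apply h1, Hbc, h2].
Qed.

Lemma eventual_limit_unique (u : nat -> R) (s t : R) :
  (forall eps, eps > 0 -> exists N, forall n, (n >= N)%nat -> (n > 0)%nat ->
     Rabs (u n - s) < eps) ->
  (forall eps, eps > 0 -> exists N, forall n, (n >= N)%nat -> (n > 0)%nat ->
     Rabs (u n - t) < eps) ->
  s = t.
Proof.
  intros Hs Ht.
  destruct (Req_dec s t) as [e|ne]; auto.
  set (eps := Rabs (s - t) / 2).
  assert (Heps : eps > 0).
  { assert (s - t <> 0) by lra; pose proof (Rabs_pos_lt _ H); unfold eps; lra. }
  destruct (Hs eps Heps) as [N1 H1], (Ht eps Heps) as [N2 H2].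
  set (n := S (Nat.max N1 N2)).
  specialize (H1 n ltac:(unfold n; lia) ltac:(unfold n; lia)).
  specialize (H2 n ltac:(unfold n; lia) ltac:(unfold n; lia)).
  assert (Rabs (s - t) <= Rabs (u n - s) + Rabs (u n - t)).
  { replace (s - t) with (- (u n - s) + (u n - t)) by ring.
    eapply Rle_trans; [apply Rabs_triang|]; rewrite Rabs_Ropp; lra. }
  unfold eps in *; lra.
Qed.

Lemma canonical_same_order_eq (b c : nat -> R) :
  same_order b c -> canonical b -> canonical c -> b = c.
Proof.
  intros Sbc [_ [Rb Fb]] [_ [Rc Fc]].
  apply functional_extensionality; intro i.
  assert (Hcount : forall n, count_below b 0 n (b i) = count_below c 0 n (c i)).
  { intro n; apply count_below_ext; intro k; apply Sbc. }
  apply (eventual_limit_unique (fun n => INR (count_below c 0 n (c i)) / INR n)).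
  - intros eps Heps; destruct (Fb (b i) (Rb i) eps Heps) as [N HN].
    exists N; intros n Hn Hn0; rewrite <- Hcount; exact (HN n 0%nat Hn Hn0).
  - intros eps Heps; destruct (Fc (c i) (Rc i) eps Heps) as [N HN].
    exists N; intros n Hn Hn0; exact (HN n 0%nat Hn Hn0).
Qed.

Theorem mainTheorem1 (a : nat -> R) :
  distinct_seq a -> ergodic a ->
  exists b : nat -> R,
    (same_order a b /\ canonical b) /\
    (forall c : nat -> R, same_order a c /\ canonical c -> c = b).
Proof.
  intros _ [b [Sab Cb]].
  exists b; split; [split; assumption |].
  intros c [Sac Cc].
  symmetry; apply canonical_same_order_eq; auto.
  exact (same_order_trans_sym a b c Sab Sac).
Qed.
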